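(* Let $m,q\in\mathbb{Q}\setminus\{0\}$ with $q\neq -1/m$. Then the torsion subgroup of $E_{m,q}(\mathbb{Q})$ contains a subgroup isomorphic to $\mathbb{Z}/2\mathbb{Z}$; explicitly $\bigl(\tfrac13((m^2+1)q^2+2mq+2),0\bigr)\in E_{m,q}(\mathbb{Q})$. Moreover, for every fixed $m\in\mathbb{Q}\setminus\{0\}$ there exist infinitely many $q\in\mathbb{Q}$ (with $q\neq0$, $q\neq-1/m$) such that the torsion subgroup of $E_{m,q}(\mathbb{Q})$ contains a subgroup isomorphic to $\mathbb{Z}/2\mathbb{Z}\times\mathbb{Z}/2\mathbb{Z}$.
   Context: For $m,q$ (rational numbers or indeterminates), $E_{m,q}$ denotes the curve given by the Weierstrass equation $$y^2=x^3-\tfrac13\bigl[(m^2+1)^2q^4+4m(m^2+1)q^3+(5m^2+4)q^2+2mq+1\bigr]x+\tfrac1{27}\bigl[2(m^2+1)^2q^4+8m(m^2+1)q^3+(7m^2+8)q^2-2mq-1\bigr]\bigl[(m^2+1)q^2+2mq+2\bigr].$$ For $m,q\in\mathbb{Q}^\times$ with $q\ne-1/m$ it is an elliptic curve. *)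

From HB Require Import structures.
From mathcomp Require Import all_boot all_order all_algebra.
Set Implicit Arguments. Unset Strict Implicit. Unset Printing Implicit Defensive.
Import Order.TTheory GRing.Theory Num.Theory.
Local Open Scope ring_scope.

Inductive point : Type := Inf | Aff of rat & rat.

Definition on_curve (a b : rat) (P : point) : bool :=
  match P with
  | Inf => true
  | Aff x y => y ^+ 2 == x ^+ 3 + a * x + b
  end.

Definition padd (a : rat) (P Q : point) : point :=
  match P, Q with
  | Inf, _ => Q
  | _, Inf => P
  | Aff x1 y1, Aff x2 y2 =>
    if x1 == x2 then
      if y1 + y2 == 0 then Inf
      else let l := (3 * x1 ^+ 2 + a) / (2 * y1) in
           let x3 := l ^+ 2 - x1 - x2 in
           Aff x3 (l * (x1 - x3) - y1)
    else let l := (y2 - y1) / (x2 - x1) in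
         let x3 := l ^+ 2 - x1 - x2 in
         Aff x3 (l * (x1 - x3) - y1)
  end.

Definition Ea (m q : rat) : rat :=
  - (1 / 3) * ((m ^+ 2 + 1) ^+ 2 * q ^+ 4 + 4 * m * (m ^+ 2 + 1) * q ^+ 3
               + (5 * m ^+ 2 + 4) * q ^+ 2 + 2 * m * q + 1).

Definition Eb (m q : rat) : rat :=
  (1 / 27) * (2 * (m ^+ 2 + 1) ^+ 2 * q ^+ 4 + 8 * m * (m ^+ 2 + 1) * q ^+ 3
              + (7 * m ^+ 2 + 8) * q ^+ 2 - 2 * m * q - 1)
           * ((m ^+ 2 + 1) * q ^+ 2 + 2 * m * q + 2).

(* E(Q) contains a subgroup isomorphic to Z/2Z (necessarily inside the
   torsion subgroup): a nonzero rational point P with 2P = O. *)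
Definition has_Z2 (a b : rat) : Prop :=
  exists P, [/\ on_curve a b P, P <> Inf & padd a P P = Inf].

(* E(Q) contains a subgroup isomorphic to Z/2Z x Z/2Z: two rational points
   P, Q with P, Q, P+Q nonzero and 2P = 2Q = O; then {O,P,Q,P+Q} is such a
   subgroup (of the torsion subgroup). *)
Definition has_Z2xZ2 (a b : rat) : Prop :=
  exists P Q, [/\ on_curve a b P, on_curve a b Q,
    [/\ P <> Inf, Q <> Inf & padd a P Q <> Inf] &
    padd a P P = Inf /\ padd a Q Q = Inf].

(* The first point is the root e1 = ((m^2+1)q^2 + 2mq + 2)/3 of the cubic.
   Dividing it out leaves a quadratic of discriminant q^2 (s^2 + 4), where
   s = (m^2+1)q + 2m, so the cubic splits over Q when s^2 + 4 is a rational
   square.  Writing s = t - 1/t makes s^2 + 4 = (t + 1/t)^2, and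
   the two remaining roots are (-e1 +- q (t + 1/t))/2; they are distinct as
   soon as q != 0 and t > 0.  Infinitely many q arise because t |-> t - 1/t is
   injective on positive rationals. *)
From HB Require Import structures.
From mathcomp Require Import all_boot all_order all_algebra.
From mathcomp Require Import ring.
Import Order.TTheory GRing.Theory Num.Theory.
Local Open Scope ring_scope.

Lemma exists_inj_notin {T : eqType} {f : nat -> T} :
  injective f -> forall s : seq T, exists n, f n \notin s.
Proof.
move=> f_inj s; have uniq_fs : uniq (map f (iota 0 (size s).+1)).
  by rewrite map_inj_uniq // iota_uniq.
case/boolP: (all (mem s) (map f (iota 0 (size s).+1))) => [/allP sub|].
  by have := uniq_leq_size uniq_fs sub; rewrite size_map size_iota ltnn.
by case/allPn=> _ /mapP[n _ ->] fn_notin; exists n.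
Qed.

Lemma on_curve_Aff0 (a b x : rat) :
  on_curve a b (Aff x 0) = (x ^+ 3 + a * x + b == 0).
Proof. by rewrite /= expr0n eq_sym. Qed.

Lemma padd_Aff0_self (a x : rat) : padd a (Aff x 0) (Aff x 0) = Inf.
Proof. by rewrite /= eqxx. Qed.

Lemma padd_Aff0_neq (a x1 x2 : rat) :
  x1 != x2 -> padd a (Aff x1 0) (Aff x2 0) <> Inf.
Proof. by rewrite /= => /negbTE ->. Qed.

Lemma has_Z2_of_root {a b x : rat} : x ^+ 3 + a * x + b = 0 -> has_Z2 a b.
Proof.
move=> root_x; exists (Aff x 0); split=> //; last exact: padd_Aff0_self.
by rewrite on_curve_Aff0 root_x.
Qed.

Lemma has_Z2xZ2_of_roots {a b x1 x2 : rat} : x1 != x2 ->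
  x1 ^+ 3 + a * x1 + b = 0 -> x2 ^+ 3 + a * x2 + b = 0 -> has_Z2xZ2 a b.
Proof.
move=> x12 root_x1 root_x2; exists (Aff x1 0), (Aff x2 0).
split; rewrite ?on_curve_Aff0 ?root_x1 ?root_x2 //.
  by split=> //; exact: padd_Aff0_neq.
by rewrite !padd_Aff0_self.
Qed.

Definition Eroot (m q : rat) : rat := (1 / 3) * ((m ^+ 2 + 1) * q ^+ 2 + 2 * m * q + 2).

Lemma Eroot_root (m q : rat) :
  Eroot m q ^+ 3 + Ea m q * Eroot m q + Eb m q = 0.
Proof. by rewrite /Eroot /Ea /Eb; field. Qed.

Section FullTwoTorsion.

Variable m : rat.

Let m2D1_neq0 : m ^+ 2 + 1 != 0.
Proof. by rewrite gt_eqF // ltr_wpDl // sqr_ge0. Qed.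

Definition qpar (t : rat) : rat := (t - t^-1 - 2 * m) / (m ^+ 2 + 1).

Definition Eroot_pm (t sg : rat) : rat :=
  (- Eroot m (qpar t) + sg * qpar t * (t + t^-1)) / 2.

Lemma Eroot_pm_root (t sg : rat) : t != 0 -> sg ^+ 2 = 1 ->
  let x := Eroot_pm t sg in
  x ^+ 3 + Ea m (qpar t) * x + Eb m (qpar t) = 0.
Proof.
move=> t_neq0 sg2.
have /orP[/eqP->|/eqP->] : (sg == 1) || (sg == -1) by rewrite -sqrf_eq1 sg2.
all: by rewrite /Eroot_pm /Eroot /qpar /Ea /Eb; field; rewrite m2D1_neq0 t_neq0.
Qed.

Lemma Eroot_pm_neq {t : rat} : 0 < t -> qpar t != 0 ->
  Eroot_pm t 1 != Eroot_pm t (-1).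
Proof.
move=> t_gt0 q_neq0; rewrite -subr_eq0.
have -> : Eroot_pm t 1 - Eroot_pm t (-1) = qpar t * (t + t^-1).
  by rewrite /Eroot_pm; field; rewrite gt_eqF.
by rewrite mulf_neq0 // gt_eqF // addr_gt0 ?invr_gt0.
Qed.

Lemma qpar_inj_pos {t1 t2 : rat} : 0 < t1 -> 0 < t2 ->
  qpar t1 = qpar t2 -> t1 = t2.
Proof.
move=> t1_gt0 t2_gt0 /(divIf m2D1_neq0) /addIr eq_s.
have : (t1 - t2) * (t1 * t2 + 1) = t1 * t2 * ((t1 - t1^-1) - (t2 - t2^-1)).
  by field; rewrite !gt_eqF.
rewrite eq_s subrr mulr0 => /eqP; rewrite mulf_eq0 subr_eq0.
by rewrite [_ + 1 == 0]gt_eqF ?addr_gt0 ?mulr_gt0 // orbF => /eqP.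
Qed.

Lemma qpar_nat_inj : injective (fun n : nat => qpar n.+1%:R).
Proof.
move=> i j /(qpar_inj_pos (ltr0Sn _ i) (ltr0Sn _ j)) /eqP.
by rewrite eqr_nat => /eqP[].
Qed.

End FullTwoTorsion.

Theorem mainTheorem5 :
  (forall m q : rat, m != 0 -> q != 0 -> q != - 1 / m ->
     on_curve (Ea m q) (Eb m q)
       (Aff ((1 / 3) * ((m ^+ 2 + 1) * q ^+ 2 + 2 * m * q + 2)) 0)
     /\ has_Z2 (Ea m q) (Eb m q)) /\
  (forall m : rat, m != 0 ->
     forall s : seq rat, exists q : rat,
       [/\ q \notin s, q != 0, q != - 1 / m & has_Z2xZ2 (Ea m q) (Eb m q)]).
Proof.
split=> [m q _ _ _ | m _ s].
  rewrite on_curve_Aff0 (Eroot_root m q) eqxx.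
  by split=> //; exact: has_Z2_of_root (Eroot_root m q).
have [n] := exists_inj_notin (qpar_nat_inj m) [:: 0, - 1 / m & s].
rewrite !inE !negb_or => /and3P[q_neq0 q_neq_pole q_notin_s].
have t_gt0 : 0 < n.+1%:R :> rat by rewrite ltr0Sn.
exists (qpar m n.+1%:R); split=> //.
have t_neq0 : n.+1%:R != 0 :> rat by rewrite gt_eqF.
apply: (has_Z2xZ2_of_roots (Eroot_pm_neq m t_gt0 q_neq0)).
  exact: Eroot_pm_root t_neq0 (expr1n _ _).
by apply: Eroot_pm_root t_neq0 _; rewrite sqrrN expr1n.
Qed.
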